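(* Let $A_{\mathrm{app}},B_{\mathrm{app}}\in K[X]$ with $n=\deg A_{\mathrm{app}}\ge d=\deg B_{\mathrm{app}}\ge1$, and assume that $B_{\mathrm{app}}$ has a nonzero coefficient in degree $<d$. Let $\varphi_A$ (on $[0,n]$) and $\varphi_B$ (on $[0,d]$) be Newton functions such that the precisions $O(\varphi_A)$ on $A_{\mathrm{app}}$ and $O(\varphi_B)$ on $B_{\mathrm{app}}$ are nondegenerate. Set $$\varphi=\varphi_A\,\overline{+}\,\big[\varphi_B\,\overline{\times}\,(\mathrm{NF}(A_{\mathrm{app}})\,\overline{\div}\,\mathrm{NF}(B_{\mathrm{app}}))\big],$$ and let $Q_{\mathrm{app}}=A_{\mathrm{app}}\,\mathrm{div}\,B_{\mathrm{app}}$ and $R_{\mathrm{app}}=A_{\mathrm{app}}\bmod B_{\mathrm{app}}$. Then for all $\delta A\in K_{\le n}[X]$ and $\delta B\in K_{\le d}[X]$ with $\mathrm{NF}(\delta A)\ge\varphi_A$ and $\mathrm{NF}(\delta B)\ge\varphi_B$, the polynomials $$Q=(A_{\mathrm{app}}+\delta A)\,\mathrm{div}\,(B_{\mathrm{app}}+\delta B),\qquad R=(A_{\mathrm{app}}+\delta A)\bmod(B_{\mathrm{app}}+\delta B)$$ satisfy $$\mathrm{NF}(Q-Q_{\mathrm{app}})\ge \varphi\,\overline{\div}\,\mathrm{NF}(B_{\mathrm{app}}),\qquad \mathrm{NF}(R-R_{\mathrm{app}})\ge\varphi\,\overline{\bmod}\,\mathrm{NF}(B_{\mathrm{app}}).$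$
   Context: $K$ is a complete discrete valuation field with valuation $\mathrm{val}:K\to\mathbb Z\cup\{+\infty\}$, normalized to be surjective, with $\mathrm{val}(0)=+\infty$. $K_{\le n}[X]$ denotes the polynomials of degree at most $n$. For $Q=\sum q_iX^i\in K[X]$ nonzero of degree $m$, its Newton function $\mathrm{NF}(Q):[0,m]\to\mathbb R\cup\{+\infty\}$ is the greatest convex function with $\mathrm{NF}(Q)(i)\le \mathrm{val}(q_i)$ for all integers $0\le i\le m$. Its epigraph is the Newton polygon $\mathrm{NP}(Q)$; an extremal point of $\mathrm{NP}(Q)$ is a vertex of this epigraph. For a convex function $g$ on $[0,M]$ and a polynomial $Q$ of degree $\le M$, ''$\mathrm{NF}(Q)\ge g$'' means $\mathrm{val}(q_i)\ge g(i)$ for all integers $0\le i\le M$. A Newton function of degree $n$ is a convex, piecewise affine function $[0,n]\to\mathbb R\cup\{+\infty\}$, finite at $n$, whose epigraph has extremal points with integral abscissae. Given $P_{\mathrm{app}}$ of degree $n$ and a Newton function $\varphi_P$ of degree $n$, the precision $O(\varphi_P)$ on $P_{\mathrm{app}}$ is nondegenerate if $\varphi_P\ge\mathrm{NF}(P_{\mathrm{app}})$ and $\varphi_P(x)>y$ for every extremal point $(x,y)$ of $\mathrm{NP}(P_{\mathrm{app}})$. $A\,\mathrm{div}\,B$ and $A\bmod B$ are the quotient and remainder of Euclidean division: $A=(A\,\mathrm{div}\,B)B+(A\bmod B)$ with $\deg(A\bmod B)<\deg B$. Operations on convex functions: - $\varphi\,\overline{+}\,\psi$ is the greatest convex function below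 both $\varphi$ and $\psi$; its epigraph is the convex hull of the union of the epigraphs. - $\varphi\,\overline{\times}\,\psi$, for $\varphi$ on $[0,n]$ and $\psi$ on $[0,m]$, is the function on $[0,n+m]$ given by $(\varphi\,\overline{\times}\,\psi)(x)=\inf_{y+z=x}\varphi(y)+\psi(z)$. Euclidean division of Newton functions: let $\varphi$ be convex on $[0,n]$, finite at $n$, and $\psi$ convex on $[0,d]$ with $1\le d\le n$ and $\psi(d-1),\psi(d)$ finite. Set $\lambda=\psi(d)-\psi(d-1)$. Let $\Delta$ be the greatest affine function of slope $\lambda$ with $\Delta\le\varphi$ on $[d,n]$, and set $\delta=\Delta(d)-\psi(d)$. Define - $\varphi\,\overline{\bmod}\,\psi=\varphi|_{[0,d-1]}\,\overline{+}\,(\psi|_{[0,d-1]}+\delta)$ on $[0,d-1]$; - $(\varphi\,\overline{\div}\,\psi)(x)=\inf_{h\ge0,\ x+d+h\le n}\big(\varphi(x+d+h)-\lambda h\big)-\psi(d)$ for $x\in[0,n-d]$. *)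

(* Since both libraries use the scope key
   %R, real arithmetic below is written with explicit function names
   (Rplus, Rmult, Rle, ...); %R refers to MathComp's ring_scope. *)
From Stdlib Require Import Reals ClassicalEpsilon ZArith.
From mathcomp Require Import all_boot all_algebra.

Set Implicit Arguments.
Unset Strict Implicit.
Unset Printing Implicit Defensive.

(* Discrete valuations  val : K -> Z u {+oo}   (None = +oo)             *)

Definition oZle (a b : option Z) : Prop :=
  match a, b with
  | _, None => True
  | None, Some _ => False
  | Some x, Some y => Z.le x y
  end.

Definition oZmin (a b : option Z) : option Z :=
  match a, b with
  | None, b => b
  | a, None => a
  | Some x, Some y => Some (Z.min x y)
  end.

Definition oZadd (a b : option Z) : option Z :=
  match a, b with
  | Some x, Some y => Some (Z.add x y)
  | _, _ => None
  end.

Definition val_ge (K : fieldType) (v : K -> option Z) (x : K) (N : Z) : Prop :=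
  oZle (Some N) (v x).

Definition is_discrete_valuation (K : fieldType) (v : K -> option Z) : Prop :=
  (forall x : K, v x = None <-> x = 0%R) /\
  (forall x y : K, v (x * y)%R = oZadd (v x) (v y)) /\
  (forall x y : K, oZle (oZmin (v x) (v y)) (v (x + y)%R)) /\
  (forall z : Z, exists x : K, v x = Some z).

Definition val_cauchy (K : fieldType) (v : K -> option Z) (u : nat -> K) : Prop :=
  forall N : Z, exists M : nat, forall p q : nat, (M <= p)%N -> (M <= q)%N ->
    val_ge v (u p - u q)%R N.

Definition val_converges (K : fieldType) (v : K -> option Z) (u : nat -> K) (l : K) : Prop :=
  forall N : Z, exists M : nat, forall p : nat, (M <= p)%N -> val_ge v (u p - l)%R N.

Definition complete_dvf (K : fieldType) (v : K -> option Z) : Prop :=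
  is_discrete_valuation v /\
  (forall u : nat -> K, val_cauchy v u -> exists l : K, val_converges v u l).

Inductive ER : Type := ERfin (r : R) | ERpinf | ERminf.

Definition ER_le (a b : ER) : Prop :=
  match a, b with
  | ERminf, _ => True
  | _, ERpinf => True
  | ERfin x, ERfin y => Rle x y
  | _, _ => False
  end.

Definition ER_lt (a b : ER) : Prop := ER_le a b /\ a <> b.

(* addition with +oo absorbing (inf-convolution convention) *)
Definition ER_add (a b : ER) : ER :=
  match a, b with
  | ERpinf, _ => ERpinf
  | _, ERpinf => ERpinf
  | ERminf, _ => ERminf
  | _, ERminf => ERminf
  | ERfin x, ERfin y => ERfin (Rplus x y)
  end.

(* real part, junk value 0 at infinities (only used on finite values) *)
Definition ER_toR (a : ER) : R := match a with ERfin x => x | _ => R0 end.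

Definition ER_is_lub (S : ER -> Prop) (s : ER) : Prop :=
  (forall e, S e -> ER_le e s) /\ (forall u, (forall e, S e -> ER_le e u) -> ER_le s u).

Definition ER_is_glb (S : ER -> Prop) (s : ER) : Prop :=
  (forall e, S e -> ER_le s e) /\ (forall u, (forall e, S e -> ER_le u e) -> ER_le u s).

Definition ER_sup (S : ER -> Prop) : ER := epsilon (inhabits ERpinf) (ER_is_lub S).
Definition ER_inf (S : ER -> Prop) : ER := epsilon (inhabits ERpinf) (ER_is_glb S).

Definition valER (K : fieldType) (v : K -> option Z) (x : K) : ER :=
  match v x with Some z => ERfin (IZR z) | None => ERpinf end.

(* Convex functions [0,a] -> R u {+oo}  (values outside [0,a] ignored)  *)

Definition in_dom (a x : R) : Prop := Rle R0 x /\ Rle x a.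

Definition convex_on (a : R) (f : R -> ER) : Prop :=
  (forall x, in_dom a x -> f x <> ERminf) /\
  (forall x y p q t : R, in_dom a x -> in_dom a y ->
     ER_le (f x) (ERfin p) -> ER_le (f y) (ERfin q) -> Rle R0 t -> Rle t R1 ->
     ER_le (f (Rplus (Rmult t x) (Rmult (Rminus R1 t) y)))
           (ERfin (Rplus (Rmult t p) (Rmult (Rminus R1 t) q)))).

Definition in_epi (a : R) (f : R -> ER) (x y : R) : Prop :=
  in_dom a x /\ ER_le (f x) (ERfin y).

Definition extremal_point (a : R) (f : R -> ER) (x y : R) : Prop :=
  in_epi a f x y /\
  forall x1 y1 x2 y2 t : R, in_epi a f x1 y1 -> in_epi a f x2 y2 ->
    Rlt R0 t -> Rlt t R1 ->
    x = Rplus (Rmult t x1) (Rmult (Rminus R1 t) x2) ->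
    y = Rplus (Rmult t y1) (Rmult (Rminus R1 t) y2) ->
    x1 = x2 /\ y1 = y2.

Definition piecewise_affine (a : R) (f : R -> ER) : Prop :=
  exists s : seq R, (0 < size s)%N /\ nth R0 s 0 = R0 /\ nth R0 s (size s).-1 = a /\
    forall j : nat, (j.+1 < size s)%N ->
      Rle (nth R0 s j) (nth R0 s j.+1) /\
      ((exists p q : R, forall x, Rlt (nth R0 s j) x -> Rlt x (nth R0 s j.+1) ->
           f x = ERfin (Rplus (Rmult p x) q)) \/
       (forall x, Rlt (nth R0 s j) x -> Rlt x (nth R0 s j.+1) -> f x = ERpinf)).

Definition newton_function (n : nat) (f : R -> ER) : Prop :=
  convex_on (INR n) f /\ piecewise_affine (INR n) f /\
  (exists r : R, f (INR n) = ERfin r) /\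
  (forall x y : R, extremal_point (INR n) f x y -> exists k : nat, x = INR k).

Section PolyNF.
Local Open Scope ring_scope.
Variables (K : fieldType) (v : K -> option Z).

Definition pcoef (Q : {poly K}) (i : nat) : K := Q`_i.

Definition NF (Q : {poly K}) : R -> ER :=
  let m := (size Q).-1 in
  fun x => ER_sup (fun e => exists g : R -> ER, convex_on (INR m) g /\
             (forall i : nat, (i <= m)%N -> ER_le (g (INR i)) (valER v (pcoef Q i))) /\
             e = g x).

(* "NF(Q) >= g" for Q of degree <= M:  val(q_i) >= g(i) for integers 0 <= i <= M *)
Definition NF_ge (M : nat) (Q : {poly K}) (g : R -> ER) : Prop :=
  (size Q <= M.+1)%N /\
  forall i : nat, (i <= M)%N -> ER_le (g (INR i)) (valER v (pcoef Q i)).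

Definition precision_nondeg (n : nat) (P : {poly K}) (phi : R -> ER) : Prop :=
  (forall x : R, in_dom (INR n) x -> ER_le (NF P x) (phi x)) /\
  (forall x y : R, extremal_point (INR n) (NF P) x y -> ER_lt (ERfin y) (phi x)).

End PolyNF.

(* phi (+) psi on [0,a]: greatest convex function below both *)
Definition ER_cvxmin (a : R) (f g : R -> ER) : R -> ER :=
  fun x => ER_sup (fun e => exists h : R -> ER, convex_on a h /\
             (forall y, in_dom a y -> ER_le (h y) (f y) /\ ER_le (h y) (g y)) /\
             e = h x).

(* phi (x) psi for phi on [0,a], psi on [0,b]: inf-convolution on [0,a+b] *)
Definition ER_infconv (a b : R) (f g : R -> ER) : R -> ER :=
  fun x => ER_inf (fun e => exists y z : R, in_dom a y /\ in_dom b z /\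
             Rplus y z = x /\ e = ER_add (f y) (g z)).

Definition nf_lambda (d : nat) (psi : R -> ER) : R :=
  Rminus (ER_toR (psi (INR d))) (ER_toR (psi (Rminus (INR d) R1))).

(* Delta(x) = lambda * x + Delta_const : greatest affine function of slope lambda
   below phi on [d,n] *)
Definition nf_Delta_const (n d : nat) (phi psi : R -> ER) : ER :=
  ER_sup (fun e => exists c : R,
    (forall x, Rle (INR d) x -> Rle x (INR n) ->
       ER_le (ERfin (Rplus (Rmult (nf_lambda d psi) x) c)) (phi x)) /\
    e = ERfin c).

Definition nf_delta (n d : nat) (phi psi : R -> ER) : ER :=
  ER_add (nf_Delta_const n d phi psi)
         (ERfin (Rminus (Rmult (nf_lambda d psi) (INR d)) (ER_toR (psi (INR d))))).

Definition nf_mod (n d : nat) (phi psi : R -> ER) : R -> ER :=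
  ER_cvxmin (Rminus (INR d) R1) phi (fun x => ER_add (psi x) (nf_delta n d phi psi)).

Definition nf_div (n d : nat) (phi psi : R -> ER) : R -> ER :=
  fun x => ER_add
    (ER_inf (fun e => exists h : R, Rle R0 h /\ Rle (Rplus (Rplus x (INR d)) h) (INR n) /\
        e = ER_add (phi (Rplus (Rplus x (INR d)) h)) (ERfin (Ropp (Rmult (nf_lambda d psi) h)))))
    (ERfin (Ropp (ER_toR (psi (INR d))))).

(* Write B = B_app + dB and lambda for the last slope of NF(B_app).  The point
   (d, val b_d) is a vertex of NP(B_app), so nondegeneracy of O(phi_B) keeps the
   valuation of the leading coefficient, and convexity of NF(B_app) puts every
   coefficient of B above the line of slope lambda through that vertex.  For any P
   with NF(P) >= f, the relation p_(k+d) = sum_j q_j b_(k+d-j) then yields by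
   descending induction on k that the quotient satisfies NF(P div B) >= f div NF(B_app),
   and R = P - (P div B) B gives NF(P mod B) >= f mod NF(B_app).  Both conclusions are
   the case P = dA - Q_app dB, for which Q - Q_app = P div B, R - R_app = P mod B, and
   NF(P) >= phi because NF(Q_app) >= NF(A_app) div NF(B_app). *)

From Stdlib Require Import Reals ClassicalEpsilon ZArith Lra Lia Classical.
From mathcomp Require Import all_boot all_algebra zify.
Import GRing.Theory.

Set Implicit Arguments.
Unset Strict Implicit.
Unset Printing Implicit Defensive.

Local Open Scope R_scope.

Lemma ER_le_refl a : ER_le a a.
Proof. by case: a => //= r; apply: Rle_refl. Qed.

Lemma ER_le_pinf a : ER_le a ERpinf.
Proof. by case: a. Qed.

Lemma ER_le_trans a b c : ER_le a b -> ER_le b c -> ER_le a c.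
Proof. by case: a; case: b; case: c => //= *; lra. Qed.

Lemma ER_le_antisym a b : ER_le a b -> ER_le b a -> a = b.
Proof. by case: a; case: b => //= r s *; f_equal; lra. Qed.

Lemma ER_lt_le_trans a b c : ER_lt a b -> ER_le b c -> ER_lt a c.
Proof.
case=> Hab Hne Hbc; split; first exact: ER_le_trans Hbc.
by move=> E; subst c; apply: Hne; apply: ER_le_antisym.
Qed.

Lemma ER_add_le a b a' b' : ER_le a a' -> ER_le b b' -> ER_le (ER_add a b) (ER_add a' b').
Proof. by case: a; case: b; case: a'; case: b' => //= *; lra. Qed.

Lemma ER_add_pinf a : ER_add a ERpinf = ERpinf.
Proof. by case: a. Qed.

Lemma ER_add_fin0 a : ER_add a (ERfin 0) = a.
Proof. by case: a => //= r; rewrite Rplus_0_r. Qed.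

Lemma ER_add_finA a x y : ER_add (ER_add a (ERfin x)) (ERfin y) = ER_add a (ERfin (x + y)).
Proof. by case: a => //= r; rewrite Rplus_assoc. Qed.

Lemma ER_le_subr a b c : ER_le (ER_add a (ERfin c)) b <-> ER_le a (ER_add b (ERfin (- c))).
Proof. by case: a; case: b => //= *; split; lra. Qed.

Lemma ER_le_fin_finite a r : ER_le a (ERfin r) -> a <> ERminf -> exists s, a = ERfin s.
Proof. by case: a => //= s; exists s. Qed.

Definition ER_opp a := match a with ERfin r => ERfin (- r) | ERpinf => ERminf | ERminf => ERpinf end.

Lemma ER_oppK a : ER_opp (ER_opp a) = a.
Proof. by case: a => //= r; rewrite Ropp_involutive. Qed.

Lemma ER_le_opp a b : ER_le (ER_opp a) (ER_opp b) <-> ER_le b a.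
Proof. by case: a; case: b => //= *; split; lra. Qed.

Lemma ER_lub_exists S : exists s, ER_is_lub S s.
Proof.
case: (classic (S ERpinf)) => HP.
  exists ERpinf; split; first by case.
  by move=> u /(_ _ HP); case: u.
pose E r := S (ERfin r).
case: (classic (exists r, E r)) => HE; last first.
  exists ERminf; split=> //.
  by case=> // r Hr; exfalso; apply: HE; exists r.
case: (classic (bound E)) => HB.
  have [m [Hm1 Hm2]] := completeness E HB HE.
  exists (ERfin m); split; first by case=> //= r Hr; apply: Hm1.
  case=> //= [b Hb|Hb]; first by apply: Hm2 => r Hr; exact: (Hb _ Hr).
  by case: HE => r Hr; exact: (Hb _ Hr).
exists ERpinf; split; first by case.
case=> // [b Hb|Hb].
  by exfalso; apply: HB; exists b => r Hr; exact: (Hb _ Hr).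
by case: HE => r Hr; exact: (Hb _ Hr).
Qed.

Lemma ER_glb_exists S : exists s, ER_is_glb S s.
Proof.
have [s [Hub Hleast]] := ER_lub_exists (fun e => S (ER_opp e)).
exists (ER_opp s); split.
  by move=> e He; rewrite -(ER_oppK e); apply/ER_le_opp; apply: Hub; rewrite ER_oppK.
move=> u Hu; rewrite -(ER_oppK u); apply/ER_le_opp; apply: Hleast => e He.
by rewrite -(ER_oppK e); apply/ER_le_opp; exact: Hu.
Qed.

Lemma ER_sup_ub S e : S e -> ER_le e (ER_sup S).
Proof. exact: (proj1 (epsilon_spec _ _ (ER_lub_exists S))). Qed.

Lemma ER_sup_le S u : (forall e, S e -> ER_le e u) -> ER_le (ER_sup S) u.
Proof. exact: (proj2 (epsilon_spec _ _ (ER_lub_exists S))). Qed.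

Lemma ER_inf_lb S e : S e -> ER_le (ER_inf S) e.
Proof. exact: (proj1 (epsilon_spec _ _ (ER_glb_exists S))). Qed.

Lemma ER_inf_ge S u : (forall e, S e -> ER_le u e) -> ER_le u (ER_inf S).
Proof. exact: (proj2 (epsilon_spec _ _ (ER_glb_exists S))). Qed.

Section Valuation.
Variables (K : fieldType) (v : K -> option Z).
Hypothesis Hv : is_discrete_valuation v.

Lemma valER_neq_minf x : valER v x <> ERminf.
Proof. by rewrite /valER; case: (v x). Qed.

Lemma valER_eq_pinf x : (valER v x = ERpinf) <-> x = 0%R.
Proof.
case: Hv => [H0 _]; rewrite /valER -H0.
by case: (v x) => [z|]; split.
Qed.

Lemma valER0 : valER v 0%R = ERpinf.
Proof. exact/valER_eq_pinf. Qed.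

Lemma valER_neq0 x : x <> 0%R -> exists r, valER v x = ERfin r.
Proof.
move=> Hx; case E: (valER v x) => [r||]; first by exists r.
  by move/valER_eq_pinf: E.
by case: (valER_neq_minf E).
Qed.

Lemma valER_mul x y : valER v (x * y)%R = ER_add (valER v x) (valER v y).
Proof.
case: (Hv) => _ [Hm _]; rewrite /valER Hm.
by case: (v x) => [a|]; case: (v y) => [b|] //=; rewrite plus_IZR.
Qed.

Lemma valER_opp x : valER v (- x)%R = valER v x.
Proof.
have Hm1 : valER v (-1)%R = ERfin 0.
  have [r Hr] : exists r, valER v (-1)%R = ERfin r.
    by apply: valER_neq0; apply/eqP; rewrite oppr_eq0 oner_eq0.
  have := valER_mul (-1)%R (-1)%R; rewrite mulrNN mulr1 Hr.
  have [s Hs] : exists s, valER v 1%R = ERfin s by apply: valER_neq0; apply/eqP; exact: oner_neq0.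
  have := valER_mul 1%R 1%R; rewrite mulr1 Hs => -[Es] [Er].
  by congr ERfin; lra.
rewrite -mulN1r valER_mul Hm1.
by case: (valER v x) => //= r; rewrite Rplus_0_l.
Qed.

Lemma valER_add_ge e x y :
  ER_le e (valER v x) -> ER_le e (valER v y) -> ER_le e (valER v (x + y)%R).
Proof.
case: (Hv) => _ [_ [Hultra _]]; have := Hultra x y; rewrite /valER.
case: (v x) => [a|]; case: (v y) => [b|]; case: (v (x + y)%R) => [c|] //=;
  case: e => //= r Hc Ha Hb.
- by case: (Z.min_spec a b) => -[_ E]; rewrite E in Hc;
    [apply: Rle_trans Ha (IZR_le _ _ Hc) | apply: Rle_trans Hb (IZR_le _ _ Hc)].
- exact: Rle_trans Ha (IZR_le _ _ Hc).
- exact: Rle_trans Hb (IZR_le _ _ Hc).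
Qed.

Lemma valER_sub_ge e x y :
  ER_le e (valER v x) -> ER_le e (valER v y) -> ER_le e (valER v (x - y)%R).
Proof. by move=> Hx Hy; apply: valER_add_ge; rewrite ?valER_opp. Qed.

Lemma valER_sum_ge e (I : Type) (r : seq I) (P : pred I) (F : I -> K) :
  (forall i, P i -> ER_le e (valER v (F i))) -> ER_le e (valER v (\sum_(i <- r | P i) F i)%R).
Proof.
move=> HF; apply: (big_ind (fun x => ER_le e (valER v x))) => //.
  by rewrite valER0; case: e {HF}.
exact: valER_add_ge.
Qed.

Lemma valER_add_strict x y a :
  valER v x = ERfin a -> ER_lt (ERfin a) (valER v y) -> valER v (x + y)%R = ERfin a.
Proof.
move=> Hx [Hay Hne].
have Hge : ER_le (ERfin a) (valER v (x + y)%R) by apply: valER_add_ge; rewrite ?Hx //=; lra.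
case Ey: (valER v y) Hay Hne => [b||] //= Hab Hne; last first.
  by move/valER_eq_pinf: Ey => ->; rewrite addr0.
have Hab' : a < b by case: Hab => // E; subst b.
have no_gap c : ER_le (ERfin c) (valER v (x + y)%R) -> a < c -> False.
  move=> Hc Hac.
  have : ER_le (ERfin (Rmin c b)) (valER v ((x + y) - y)%R).
    apply: valER_sub_ge; last by rewrite Ey /=; exact: Rmin_r.
    by apply: ER_le_trans Hc; exact: Rmin_l.
  by rewrite addrK Hx /=; apply: Rlt_not_le; exact: Rmin_glb_lt.
case Exy: (valER v (x + y)%R) Hge => [c||] //= Hac.
- congr ERfin; apply: Rle_antisym => //; apply: Rnot_lt_le => Hca.
  by apply: (no_gap c); rewrite ?Exy //=; apply: Rle_refl.
- by case: (no_gap b); rewrite ?Exy.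
Qed.

Lemma valER_lower_bound (f : nat -> K) N :
  exists M, forall i, (i <= N)%N -> ER_le (ERfin M) (valER v (f i)).
Proof.
have valER_fin_lb x : exists M, ER_le (ERfin M) (valER v x).
  by rewrite /valER; case: (v x) => [z|]; [exists (IZR z); apply: Rle_refl | exists 0].
elim: N => [|N [M HM]].
  have [M HM] := valER_fin_lb (f 0%N).
  by exists M => i; rewrite leqn0 => /eqP ->.
have [M' HM'] := valER_fin_lb (f N.+1); exists (Rmin M M') => i.
rewrite leq_eqVlt ltnS => /orP[/eqP ->|Hi].
  apply: ER_le_trans HM'; exact: Rmin_r.
apply: ER_le_trans (HM _ Hi); exact: Rmin_l.
Qed.

End Valuation.

Lemma ratio_unit_interval a b : 0 <= a <= b -> 0 < b -> 0 <= a / b <= 1.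
Proof.
move=> [Ha Hab] Hb; split; first exact: Rle_mult_inv_pos.
by apply: (Rmult_le_reg_r b) => //; rewrite /Rdiv Rmult_assoc Rinv_l; lra.
Qed.

Lemma convex_at a f x y p q t z : convex_on a f -> in_dom a x -> in_dom a y ->
  ER_le (f x) (ERfin p) -> ER_le (f y) (ERfin q) -> 0 <= t <= 1 ->
  z = t * x + (1 - t) * y -> ER_le (f z) (ERfin (t * p + (1 - t) * q)).
Proof. by move=> [_ Hf] Hx Hy Hp Hq [Ht0 Ht1] ->; apply: Hf. Qed.

Lemma convex_finite_between a f x y z p q : convex_on a f -> in_dom a x -> in_dom a y ->
  x <= z <= y -> ER_le (f x) (ERfin p) -> ER_le (f y) (ERfin q) -> exists r, f z = ERfin r.
Proof.
move=> Hf Hx Hy [Hxz Hzy] Hp Hq.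
have Hz : in_dom a z by case: Hx Hy => [? ?] [? ?]; split; lra.
have [Exy|Hxy] := Req_dec x y.
  subst y; have -> : z = x by lra.
  exact: ER_le_fin_finite Hp (proj1 Hf _ Hx).
apply: (ER_le_fin_finite _ (proj1 Hf _ Hz)).
apply: (convex_at (t := (y - z) / (y - x))) Hf Hx Hy Hp Hq _ _.
  by apply: ratio_unit_interval; lra.
by field; lra.
Qed.

Lemma extremal_point_end a f y : 0 <= a -> f a = ERfin y -> extremal_point a f a y.
Proof.
move=> Ha Hfa; split; first by split; [split; [lra | apply: Rle_refl] | rewrite Hfa; apply: Rle_refl].
move=> x1 y1 x2 y2 t [[Hx10 Hx11] Hy1] [[Hx20 Hx21] Hy2] Ht0 Ht1 Ex Ey.
have E1 : x1 = a by nra.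
have E2 : x2 = a by nra.
subst x1 x2; rewrite Hfa /= in Hy1 Hy2; split=> //; nra.
Qed.

Section LastSlope.
Variables (m vd w : R) (psi : R -> ER).
Hypotheses (Hpsi : convex_on m psi) (Hm : 1 <= m).
Hypotheses (Hvd : psi m = ERfin vd) (Hw : psi (m - 1) = ERfin w).

Lemma convex_last_slope_below x : 0 <= x <= m - 1 ->
  ER_le (ERfin (vd - (vd - w) * (m - x))) (psi x).
Proof.
move=> [Hx0 Hx1]; case Ex: (psi x) => [r||] //=; last by case: (proj1 Hpsi x); [split; lra|].
have Ht : 0 <= 1 / (m - x) <= 1 by apply: ratio_unit_interval; lra.
have Hconv : ER_le (psi (m - 1)) (ERfin (1 / (m - x) * r + (1 - 1 / (m - x)) * vd)).
  apply: (convex_at (x := x) (y := m) Hpsi) => //; try (split; lra).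
  - by rewrite Ex; exact: Rle_refl.
  - by rewrite Hvd; exact: Rle_refl.
  - by field; lra.
rewrite Hw /= in Hconv.
have -> : r = (m - x) * (1 / (m - x) * r + (1 - 1 / (m - x)) * vd) - (m - x - 1) * vd.
  by field; lra.
nra.
Qed.

Lemma convex_le_last_slope x y r : 0 <= x -> x <= y -> y <= m - 1 ->
  ER_le (psi x) (ERfin r) -> ER_le (psi y) (ERfin (r + (vd - w) * (y - x))).
Proof.
move=> Hx0 Hxy Hy1 Hr.
have /= Hline := ER_le_trans (convex_last_slope_below (conj Hx0 (Rle_trans _ _ _ Hxy Hy1))) Hr.
set t := (m - y) / (m - x).
have Ht : 0 <= t <= 1 by apply: ratio_unit_interval; lra.
have E1t : 1 - t = (y - x) / (m - x) by rewrite /t; field; lra.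
have Hconv : ER_le (psi y) (ERfin (t * r + (1 - t) * vd)).
  apply: (@convex_at m psi x m r vd t y Hpsi _ _ Hr) => //; try (split; lra).
    by rewrite Hvd; apply: Rle_refl.
  by rewrite /t; field; lra.
apply: ER_le_trans Hconv _.
have Hw1t : 0 <= 1 - t by lra.
have : (1 - t) * (vd - r) <= (1 - t) * ((vd - w) * (m - x)) by apply: Rmult_le_compat_l; lra.
have -> : (1 - t) * ((vd - w) * (m - x)) = (vd - w) * (y - x) by rewrite E1t; field; lra.
rewrite /=; nra.
Qed.

End LastSlope.

Lemma in_dom_INR a i : (i <= a)%N -> in_dom (INR a) (INR i).
Proof. by move=> H; split; [exact: pos_INR | apply: le_INR; exact/leP]. Qed.

Lemma INR_lt_succ i d : (i < d)%N -> INR i + 1 <= INR d.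
Proof. by move=> H; rewrite -S_INR; apply: le_INR; apply/leP. Qed.

Lemma INR_ge1 d : (1 <= d)%N -> 1 <= INR d.
Proof. by move=> Hd; have := INR_lt_succ Hd; rewrite /= => H; lra. Qed.

Lemma INR_subn m k : (k <= m)%N -> INR (m - k) = INR m - INR k.
Proof. by move=> H; rewrite -minus_INR //; apply/leP. Qed.

Lemma affine_convex a c s : convex_on a (fun x => ERfin (c + s * x)).
Proof.
split=> // x y p q t _ _ /= Hp Hq Ht0 Ht1.
have H1 : t * (c + s * x) <= t * p by apply: Rmult_le_compat_l.
have H2 : (1 - t) * (c + s * y) <= (1 - t) * q by apply: Rmult_le_compat_l; lra.
nra.
Qed.

Section NewtonFunction.
Variables (K : fieldType) (v : K -> option Z).
Hypothesis Hv : is_discrete_valuation v.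

Lemma NF_le_coef (P : {poly K}) i :
  (i <= (size P).-1)%N -> ER_le (NF v P (INR i)) (valER v P`_i).
Proof. by move=> Hi; apply: ER_sup_le => e [g [_ [Hg ->]]]; exact: Hg. Qed.

Lemma NF_ge_NF (P : {poly K}) : NF_ge v (size P).-1 P (NF v P).
Proof. by split; [exact: leqSpred | exact: NF_le_coef]. Qed.

Lemma NF_ge_minorant (P : {poly K}) g x : convex_on (INR (size P).-1) g ->
  (forall i, (i <= (size P).-1)%N -> ER_le (g (INR i)) (valER v P`_i)) ->
  ER_le (g x) (NF v P x).
Proof. by move=> Hg Hgi; apply: ER_sup_ub; exists g. Qed.

Lemma NF_lower_bound (P : {poly K}) : exists M, forall x, ER_le (ERfin M) (NF v P x).
Proof.
have [M HM] := valER_lower_bound v (pcoef P) (size P).-1.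
exists M => x; have := @NF_ge_minorant P (fun x => ERfin (M + 0 * x)) x (affine_convex _ _ _).
rewrite Rmult_0_l Rplus_0_r; apply=> i Hi /=; rewrite Rmult_0_l Rplus_0_r; exact: HM.
Qed.

Lemma NF_convex (P : {poly K}) : convex_on (INR (size P).-1) (NF v P).
Proof.
split.
  by move=> x _; have [M /(_ x)] := NF_lower_bound P; case: (NF v P x).
move=> x y p q t Hx Hy Hp Hq Ht0 Ht1; apply: ER_sup_le => e [g [Hg [Hgi ->]]].
apply: (proj2 Hg) => //.
  by apply: ER_le_trans Hp; exact: NF_ge_minorant.
by apply: ER_le_trans Hq; exact: NF_ge_minorant.
Qed.

Lemma NF_lead (P : {poly K}) : P != 0%R ->
  NF v P (INR (size P).-1) = valER v (lead_coef P).
Proof.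
move=> HP; have [vd Hvd] : exists vd, valER v (lead_coef P) = ERfin vd.
  by apply: (valER_neq0 Hv); apply/eqP; rewrite lead_coef_eq0.
apply: ER_le_antisym; first by rewrite lead_coefE; exact: NF_le_coef.
have [M HM] := valER_lower_bound v (pcoef P) (size P).-1.
(* The witness is a line through (N, vd) steep enough to pass below every other coefficient. *)
set N := (size P).-1; set s := Rmax 0 (vd - M).
have Hs0 : 0 <= s := Rmax_l _ _.
have HsM : vd - M <= s := Rmax_r _ _.
have Hmin : ER_le (ERfin ((vd - s * INR N) + s * INR N)) (NF v P (INR N)).
  apply: (@NF_ge_minorant P (fun x => ERfin ((vd - s * INR N) + s * x))); first exact: affine_convex.
  move=> i Hi; case: (ltnP i N) => HiN.
    apply: ER_le_trans (HM _ Hi) => /=.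
    have := Rmult_le_compat_l _ _ _ Hs0 (INR_lt_succ HiN); nra.
  have -> : i = N by apply/eqP; rewrite eqn_leq Hi HiN.
  by rewrite /N -lead_coefE Hvd /=; apply: Req_le; ring.
by apply: ER_le_trans Hmin; rewrite Hvd /=; apply: Req_le; ring.
Qed.

Lemma NF_ge_le M (P : {poly K}) f g :
  NF_ge v M P f -> (forall i, (i <= M)%N -> ER_le (g (INR i)) (f (INR i))) -> NF_ge v M P g.
Proof. by move=> [HP Hf] Hgf; split=> // i Hi; exact: ER_le_trans (Hgf _ Hi) (Hf _ Hi). Qed.

Lemma NF_ge_sub M (P P' : {poly K}) f : NF_ge v M P f -> NF_ge v M P' f -> NF_ge v M (P - P')%R f.
Proof.
move=> [HP Hf] [HP' Hf']; split=> [|i Hi].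
  by apply: leq_trans (size_polyD _ _) _; rewrite size_polyN geq_max HP.
by rewrite /pcoef coefB; apply: (valER_sub_ge Hv); [exact: Hf | exact: Hf'].
Qed.

Lemma NF_ge_mul da db (P P' : {poly K}) f f' :
  NF_ge v da P f -> NF_ge v db P' f' ->
  NF_ge v (da + db) (P * P')%R (ER_infconv (INR da) (INR db) f f').
Proof.
move=> [HP Hf] [HP' Hf']; split=> [|i Hi].
  by apply: leq_trans (size_polyMleq _ _) _; rewrite -subn1 leq_subLR; lia.
rewrite /pcoef coefM; apply: (valER_sum_ge Hv) => // -[j Hj] _ /=.
case: (leqP j da) => Hjda; last first.
  by rewrite [(P`_j)%R]nth_default ?mul0r ?(valER0 Hv) //; [exact: ER_le_pinf | exact: leq_trans HP Hjda].
case: (leqP (i - j) db) => Hjdb; last first.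
  by rewrite [(P'`_(i - j))%R]nth_default ?mulr0 ?(valER0 Hv) //; [exact: ER_le_pinf | exact: leq_trans HP' Hjdb].
rewrite (valER_mul Hv); apply: ER_le_trans (ER_add_le (Hf _ Hjda) (Hf' _ Hjdb)).
apply: ER_inf_lb; exists (INR j), (INR (i - j)); do 2!(split; first exact: in_dom_INR).
by split=> //; rewrite INR_subn //; ring.
Qed.

End NewtonFunction.

Definition nf_div_inf (n d : nat) (f : R -> ER) (lam x : R) : ER :=
  ER_inf (fun e => exists h : R, 0 <= h /\ x + INR d + h <= INR n /\
    e = ER_add (f (x + INR d + h)) (ERfin (- (lam * h)))).

Lemma nf_divE n d f psi x : nf_div n d f psi x =
  ER_add (nf_div_inf n d f (nf_lambda d psi) x) (ERfin (- ER_toR (psi (INR d)))).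
Proof. by []. Qed.

Lemma nf_div_inf_shift n d f lam x y : x <= y ->
  ER_le (nf_div_inf n d f lam x) (ER_add (nf_div_inf n d f lam y) (ERfin (- (lam * (y - x))))).
Proof.
move=> Hxy; rewrite -[X in ERfin (- X)]Ropp_involutive; apply/ER_le_subr.
apply: ER_inf_ge => e [h [Hh0 [Hhn ->]]]; apply/ER_le_subr; rewrite Ropp_involutive ER_add_finA.
apply: ER_inf_lb; exists (h + (y - x)).
have -> : x + INR d + (h + (y - x)) = y + INR d + h by ring.
by split; [lra | split; [lra | congr ER_add; congr ERfin; ring]].
Qed.

Lemma nf_div_inf_le n d f lam x : x + INR d <= INR n ->
  ER_le (nf_div_inf n d f lam x) (f (x + INR d)).
Proof.
move=> Hx; rewrite -[f _]ER_add_fin0; apply: ER_inf_lb; exists 0.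
rewrite Rplus_0_r; split; first exact: Rle_refl.
by split=> //; congr ER_add; congr ERfin; ring.
Qed.

Lemma nf_Delta_le_div_inf n d phi psi x : 0 <= x ->
  ER_le (ER_add (nf_Delta_const n d phi psi) (ERfin (nf_lambda d psi * (x + INR d))))
        (nf_div_inf n d phi (nf_lambda d psi) x).
Proof.
move=> Hx; apply: ER_inf_ge => e [h [Hh0 [Hhn ->]]].
have -> : nf_lambda d psi * (x + INR d) = nf_lambda d psi * (x + INR d + h) + - (nf_lambda d psi * h)
  by ring.
rewrite -ER_add_finA; apply: ER_add_le (ER_le_refl _).
apply/ER_le_subr; apply: ER_sup_le => e' [c [Hc ->]]; apply/ER_le_subr.
have -> : ER_add (ERfin c) (ERfin (nf_lambda d psi * (x + INR d + h))) =
          ERfin (nf_lambda d psi * (x + INR d + h) + c) by rewrite /= Rplus_comm.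
by apply: Hc; lra.
Qed.

Lemma ER_cvxmin_le a f g x : in_dom a x ->
  ER_le (ER_cvxmin a f g x) (f x) /\ ER_le (ER_cvxmin a f g x) (g x).
Proof. by move=> Hx; split; apply: ER_sup_le => e [h [_ [Hh ->]]]; case: (Hh x Hx). Qed.

Lemma coef_divp_lead (K : fieldType) (P B : {poly K}) d k : size B = d.+1 ->
  ((P %/ B)`_k * B`_d = P`_(k + d) -
     \sum_(j < (k + d).+1 | (j : nat) != k) (P %/ B)`_j * B`_(k + d - j))%R.
Proof.
move=> HszB.
have HszR : (size (P %% B)%R <= d)%N by rewrite -ltnS -HszB ltn_modp -size_poly_eq0 HszB.
have Hk : (k < (k + d).+1)%N by lia.
rewrite {2}(divp_eq P B) coefD [((P %% B)`_ _)%R]nth_default ?addr0; last exact: leq_trans HszR (leq_addl k d).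
rewrite coefM (bigD1 (Ordinal Hk)) //= addKn.
rewrite (eq_bigl (fun j : 'I_(k + d).+1 => (j : nat) != k)) => [|j]; last by rewrite -val_eqE.
by rewrite addrK.
Qed.

Lemma divp_modp_perturb (K : fieldType) (A B dA dB : {poly K}) :
  (size (A %% B)%R < size (B + dB)%R)%N ->
  ((dA - dB * (A %/ B)) %/ (B + dB) = (A + dA) %/ (B + dB) - A %/ B)%R /\
  ((dA - dB * (A %/ B)) %% (B + dB) = (A + dA) %% (B + dB) - A %% B)%R.
Proof.
set q := (A %/ B)%R; set r := (A %% B)%R; set B' := (B + dB)%R => Hsz.
have HB' : B' != 0%R by rewrite -size_poly_eq0 -lt0n; exact: leq_ltn_trans Hsz.
have Hsz' : (size ((A + dA) %% B' - r)%R < size B')%N.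
  by apply: leq_ltn_trans (size_polyD _ _) _; rewrite size_polyN gtn_max ltn_modp HB'.
have Hid : (dA - dB * q = ((A + dA) %/ B' - q) * B' + ((A + dA) %% B' - r))%R.
  rewrite mulrBl addrACA -divp_eq {1}(divp_eq A B) -/q -/r /B' mulrDr (mulrC dB q).
  rewrite !opprD !addrA (addrAC (q * B + r)%R) (addrC (q * B)%R) addrK.
  by rewrite (addrAC (r + dA)%R) (addrC r) addrK.
by rewrite Hid divp_addl_mul_small // modp_addl_mul_small.
Qed.

Section EuclideanDivision.
Variables (K : fieldType) (v : K -> option Z).
Hypothesis Hv : is_discrete_valuation v.
Variables (n d : nat) (vd w : R) (psi : R -> ER) (B : {poly K}).
Hypotheses (Hd1 : (1 <= d)%N) (Hdn : (d <= n)%N).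
Hypotheses (Hpsi : convex_on (INR d) psi).
Hypotheses (Hpsid : psi (INR d) = ERfin vd) (Hpsid1 : psi (INR d - 1) = ERfin w).
Hypotheses (HszB : size B = d.+1) (Hlead : valER v (B`_d)%R = ERfin vd).
Hypothesis HBpsi : forall j, (j <= d)%N -> ER_le (psi (INR j)) (valER v (B`_j)%R).

Lemma nf_lambda_last_edge : nf_lambda d psi = vd - w.
Proof. by rewrite /nf_lambda Hpsid Hpsid1. Qed.

Lemma coef_ge_last_edge j : (j <= d)%N ->
  ER_le (ERfin (vd - nf_lambda d psi * (INR d - INR j))) (valER v (B`_j)%R).
Proof.
rewrite nf_lambda_last_edge leq_eqVlt => /orP[/eqP ->|Hj].
  by rewrite Hlead /=; apply: Req_le; ring.
apply: ER_le_trans (HBpsi (ltnW Hj)).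
apply: (convex_last_slope_below Hpsi (INR_ge1 Hd1) Hpsid Hpsid1).
by split; [exact: pos_INR | have := INR_lt_succ Hj; lra].
Qed.

Lemma divp_coef_step (P : {poly K}) f : NF_ge v n P f -> forall k, (k <= n - d)%N ->
  (forall j, (k < j <= n - d)%N -> ER_le (ER_add (nf_div_inf n d f (nf_lambda d psi) (INR j))
                                         (ERfin (- vd))) (valER v ((P %/ B)`_j)%R)) ->
  ER_le (ER_add (nf_div_inf n d f (nf_lambda d psi) (INR k)) (ERfin (- vd)))
        (valER v ((P %/ B)`_k)%R).
Proof.
move=> [HszP HP] k Hk IH; set lam := nf_lambda d psi.
have HszQ : (size (P %/ B)%R <= (n - d).+1)%N.
  rewrite size_divp ?HszB /=; last by rewrite -size_poly_eq0 HszB.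
  by apply: leq_trans (leq_sub2r d HszP) _; lia.
have Hkd : INR k + INR d <= INR n by rewrite -plus_INR; apply: le_INR; apply/leP; lia.
suff Hmain : ER_le (nf_div_inf n d f lam (INR k)) (valER v ((P %/ B)`_k * B`_d)%R).
  by rewrite (valER_mul Hv) Hlead in Hmain; apply/ER_le_subr; rewrite Ropp_involutive.
rewrite coef_divp_lead //; apply: (valER_sub_ge Hv).
  apply: ER_le_trans (nf_div_inf_le _ _ Hkd) _; rewrite -plus_INR; apply: HP; lia.
apply: (valER_sum_ge Hv) => -[j Hj] /= Hjk.
case: (ltnP j k) => Hjlt.
  by rewrite [(B`_ _)%R]nth_default ?mulr0 ?(valER0 Hv) ?HszB; [exact: ER_le_pinf | lia].
case: (leqP j (n - d)) => Hjn; last first.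
  by rewrite [((P %/ B)`_j)%R]nth_default ?mul0r ?(valER0 Hv); [exact: ER_le_pinf | exact: leq_trans HszQ Hjn].
have Hkj : (k < j)%N by rewrite ltn_neqAle eq_sym Hjk.
have Hkj' : INR k <= INR j by apply: le_INR; apply/leP; lia.
apply: ER_le_trans (nf_div_inf_shift _ _ _ _ Hkj') _.
rewrite (valER_mul Hv).
apply: ER_le_trans (ER_add_le (IH j _) (coef_ge_last_edge (j := k + d - j) _)); last 2 first.
- by rewrite Hkj Hjn.
- lia.
rewrite ER_add_finA INR_subn ?plus_INR; last lia.
have -> : - vd + (vd - lam * (INR d - (INR k + INR d - INR j))) = - (lam * (INR j - INR k))
  by ring.
exact: ER_le_refl.
Qed.

Lemma NF_ge_divp (P : {poly K}) f : NF_ge v n P f -> NF_ge v (n - d) (P %/ B)%R (nf_div n d f psi).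
Proof.
move=> HP; split.
  rewrite size_divp ?HszB /=; last by rewrite -size_poly_eq0 HszB.
  by apply: leq_trans (leq_sub2r d HP.1) _; lia.
(* Descending induction: q_k b_d = p_(k+d) - sum_(j <> k) q_j b_(k+d-j) only involves q_j, j > k. *)
suff Hdesc : forall t k, (n - d < k + t)%N -> (k <= n - d)%N ->
    ER_le (ER_add (nf_div_inf n d f (nf_lambda d psi) (INR k)) (ERfin (- vd))) (valER v ((P %/ B)`_k)%R).
  by move=> k Hk; rewrite nf_divE Hpsid; apply: (Hdesc (n - d).+1) => //; lia.
elim=> [|t IHt] k Hkt Hk; first lia.
apply: divp_coef_step => // j /andP[Hkj Hjn]; apply: IHt => //; lia.
Qed.

Lemma modp_term_ge (P : {poly K}) f : NF_ge v n P f -> forall i k,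
  (i < d)%N -> (k <= i)%N -> (k <= n - d)%N ->
  ER_le (nf_mod n d f psi (INR i)) (valER v ((P %/ B)`_k * B`_(i - k))%R).
Proof.
move=> HP i k Hid Hki Hkn.
have Hi1 : INR i <= INR d - 1 by have := INR_lt_succ Hid; lra.
have Hdom : in_dom (INR d - 1) (INR i) by split; [exact: pos_INR | exact: Hi1].
have [_ Hmod] := ER_cvxmin_le f (fun x => ER_add (psi x) (nf_delta n d f psi)) Hdom.
have HQk := (NF_ge_divp HP).2 k Hkn; rewrite nf_divE Hpsid [ER_toR _]/= in HQk.
have {}HQk := ER_le_trans (ER_add_le (nf_Delta_le_div_inf n d f psi (pos_INR k)) (ER_le_refl _)) HQk.
rewrite (valER_mul Hv); case EB: (valER v (B`_(i - k))%R) => [r||]; last first.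
- by case: (valER_neq_minf EB).
- by rewrite ER_add_pinf; exact: ER_le_pinf.
have Hik : INR (i - k) <= INR i by apply: le_INR; apply/leP; exact: leq_subr.
have HBr : ER_le (psi (INR (i - k))) (ERfin r) by rewrite -EB; apply: HBpsi; lia.
have Hst := convex_le_last_slope Hpsi (INR_ge1 Hd1) Hpsid Hpsid1 (pos_INR _) Hik Hi1 HBr.
(* q_k >= Delta(k + d) - vd and psi i <= psi (i - k) + lambda k: the term is >= psi i + delta. *)
apply: ER_le_trans Hmod _; apply: ER_le_trans (ER_add_le Hst (ER_le_refl _)) _.
apply: ER_le_trans _ (ER_add_le HQk (ER_le_refl (ERfin r))).
rewrite /nf_delta Hpsid nf_lambda_last_edge INR_subn //.
by case: (nf_Delta_const n d f psi) => [D||] //=; apply: Req_le; ring.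
Qed.

Lemma NF_ge_modp (P : {poly K}) f : NF_ge v n P f -> NF_ge v d.-1 (P %% B)%R (nf_mod n d f psi).
Proof.
move=> HP; split; first by rewrite prednK // -ltnS -HszB ltn_modp -size_poly_eq0 HszB.
move=> i Hi; have Hid : (i < d)%N by rewrite -(prednK Hd1) ltnS.
have Hdom : in_dom (INR d - 1) (INR i) by split; [exact: pos_INR | have := INR_lt_succ Hid; lra].
have HPB : (P %% B = P - P %/ B * B)%R by rewrite {2}(divp_eq P B) addrAC subrr add0r.
rewrite /pcoef HPB coefB; apply: (valER_sub_ge Hv).
  apply: ER_le_trans (ER_cvxmin_le _ _ Hdom).1 (HP.2 _ _); lia.
rewrite coefM; apply: (valER_sum_ge Hv) => -[k Hk] _ /=.
case: (leqP k (n - d)) => Hkn; first exact: modp_term_ge.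
rewrite [((P %/ B)`_k)%R]nth_default ?mul0r ?(valER0 Hv); first exact: ER_le_pinf.
by apply: leq_trans (NF_ge_divp HP).1 Hkn.
Qed.
End EuclideanDivision.

Lemma size_poly_eqS (K : fieldType) (p : {poly K}) d :
  (size p <= d.+1)%N -> (p`_d != 0)%R -> size p = d.+1.
Proof.
move=> Hle Hd; apply/eqP; rewrite eqn_leq Hle ltnNge.
by apply: contra Hd => Hs; apply/eqP; exact: nth_default.
Qed.

Section Divisor.
Variables (K : fieldType) (v : K -> option Z).
Hypothesis Hv : is_discrete_valuation v.
Variables (d : nat) (B : {poly K}).
Hypothesis HszB : size B = d.+1.

Lemma NF_last_edge : (exists i, (i < d)%N /\ pcoef B i <> 0%R) ->
  exists vd w, valER v (B`_d)%R = ERfin vd /\ NF v B (INR d) = ERfin vd /\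
               NF v B (INR d - 1) = ERfin w.
Proof.
move=> [i [Hid Hi0]].
have HB0 : B != 0%R by rewrite -size_poly_eq0 HszB.
have [vd Hvd] : exists vd, valER v (B`_d)%R = ERfin vd.
  by apply: (valER_neq0 Hv); apply/eqP; rewrite -lead_coef_eq0 lead_coefE HszB in HB0.
have HNd : NF v B (INR d) = ERfin vd.
  by have := NF_lead Hv HB0; rewrite lead_coefE HszB Hvd.
have [r Hr] := valER_neq0 Hv Hi0.
have Hcvx : convex_on (INR d) (NF v B) by have := NF_convex v B; rewrite HszB.
have [w Hw] : exists w, NF v B (INR d - 1) = ERfin w.
  apply: (convex_finite_between (x := INR i) (y := INR d) (p := r) (q := vd) Hcvx).
  - exact/in_dom_INR/ltnW.
  - exact: in_dom_INR.
  - by have := INR_lt_succ Hid; lra.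
  - by rewrite -Hr; apply: NF_le_coef; rewrite HszB; exact: ltnW.
  - by rewrite HNd; exact: Rle_refl.
by exists vd, w.
Qed.

Lemma NF_ge_perturbed_divisor phiB dB : precision_nondeg v d B phiB -> NF_ge v d dB phiB ->
  NF_ge v d (B + dB)%R (NF v B).
Proof.
move=> [Hnd _] [HszdB HdB]; split.
  by apply: leq_trans (size_polyD _ _) _; rewrite geq_max HszB leqnn.
move=> j Hj; rewrite /pcoef coefD; apply: (valER_add_ge Hv).
  by apply: NF_le_coef; rewrite HszB.
exact: ER_le_trans (Hnd _ (in_dom_INR Hj)) (HdB _ Hj).
Qed.

Lemma perturbed_divisor_lead phiB dB vd : precision_nondeg v d B phiB -> NF_ge v d dB phiB ->
  NF v B (INR d) = ERfin vd -> valER v (B`_d)%R = ERfin vd ->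
  valER v ((B + dB)`_d)%R = ERfin vd /\ size (B + dB)%R = d.+1.
Proof.
move=> Hnd HdB HNd Hvd.
have Hext := extremal_point_end (pos_INR d) HNd.
have Hlt := ER_lt_le_trans (Hnd.2 _ _ Hext) (HdB.2 _ (leqnn d)).
have Hlead : valER v ((B + dB)`_d)%R = ERfin vd by rewrite coefD; exact: valER_add_strict.
split=> //; apply: size_poly_eqS; first exact: (NF_ge_perturbed_divisor Hnd HdB).1.
by apply/eqP => H0; move: Hlead; rewrite H0 (valER0 Hv).
Qed.
End Divisor.

Local Close Scope R_scope.

Theorem proposition3p3 (K : fieldType) (v : K -> option Z) (Hv : complete_dvf v)
  (Aapp Bapp : {poly K}) (n d : nat)
  (HdegA : size Aapp = n.+1) (HdegB : size Bapp = d.+1)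
  (Hd1 : (1 <= d)%N) (Hdn : (d <= n)%N)
  (HBlow : exists i : nat, (i < d)%N /\ pcoef Bapp i <> 0%R)
  (phiA phiB : R -> ER)
  (HphiA : newton_function n phiA) (HphiB : newton_function d phiB)
  (HndA : precision_nondeg v n Aapp phiA) (HndB : precision_nondeg v d Bapp phiB) :
  let phi := ER_cvxmin (INR n) phiA
               (ER_infconv (INR d) (INR (n - d)) phiB
                  (nf_div n d (NF v Aapp) (NF v Bapp))) in
  let Qapp := (Aapp %/ Bapp)%R in
  let Rapp := (Aapp %% Bapp)%R in
  forall dA dB : {poly K},
    (size dA <= n.+1)%N -> (size dB <= d.+1)%N ->
    NF_ge v n dA phiA -> NF_ge v d dB phiB ->
    let Q := ((Aapp + dA) %/ (Bapp + dB))%R in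
    let Rm := ((Aapp + dA) %% (Bapp + dB))%R in
    NF_ge v (n - d) (Q - Qapp)%R (nf_div n d phi (NF v Bapp)) /\
    NF_ge v d.-1 (Rm - Rapp)%R (nf_mod n d phi (NF v Bapp)).
Proof.
move=> phi Qapp Rapp dA dB _ _ HdA HdB Q Rm.
have Hv' : is_discrete_valuation v by case: Hv.
have [vd [w [Hlead [HNd HNd1]]]] := NF_last_edge Hv' HdegB HBlow.
have Hcvx : convex_on (INR d) (NF v Bapp) by have := NF_convex v Bapp; rewrite HdegB.
have HBapp : NF_ge v d Bapp (NF v Bapp) by have := NF_ge_NF v Bapp; rewrite HdegB.
have HBp := NF_ge_perturbed_divisor Hv' HdegB HndB HdB.
have [Hlead' HszBp] := perturbed_divisor_lead Hv' HdegB HndB HdB HNd Hlead.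
have HQapp : NF_ge v (n - d) Qapp (nf_div n d (NF v Aapp) (NF v Bapp)).
  apply: (NF_ge_divp Hv' Hd1 Hdn Hcvx HNd HNd1 HdegB Hlead HBapp.2).
  by have := NF_ge_NF v Aapp; rewrite HdegA.
have HP : NF_ge v n (dA - dB * Qapp)%R phi.
  have HdBQ := NF_ge_mul Hv' HdB HQapp; rewrite subnKC // in HdBQ.
  apply: (NF_ge_sub Hv').
    by apply: NF_ge_le HdA _ => i Hi; exact: (ER_cvxmin_le _ _ (in_dom_INR Hi)).1.
  by apply: NF_ge_le HdBQ _ => i Hi; exact: (ER_cvxmin_le _ _ (in_dom_INR Hi)).2.
have Hsz : (size (Aapp %% Bapp)%R < size (Bapp + dB)%R)%N.
  by rewrite HszBp -HdegB ltn_modp -size_poly_eq0 HdegB.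
have [HQ HR] := divp_modp_perturb dA Hsz.
rewrite -/Qapp -/Rapp -/Q -/Rm in HQ HR; rewrite -HQ -HR; split.
  exact: (NF_ge_divp Hv' Hd1 Hdn Hcvx HNd HNd1 HszBp Hlead' HBp.2 HP).
exact: (NF_ge_modp Hv' Hd1 Hdn Hcvx HNd HNd1 HszBp Hlead' HBp.2 HP).
Qed.
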